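(* Let $(\mathbf{x}_i,y_i)$, $i=1,\dots,n$, be training samples with $\mathbf{x}_i\in\mathbb{R}^d$ and $y_i\in\{1,2\}$, let $\mathbf{x}^*_{i'}\in\mathbb{R}^d$, $i'=1,\dots,m$, be universum samples, and let $C,C^*>0$, $\Delta\ge 0$. Consider the two-class MU-SVM problem $$\min_{\mathbf{w}_1,\mathbf{w}_2,\boldsymbol\xi,\boldsymbol\zeta}\ \tfrac12(\|\mathbf{w}_1\|_2^2+\|\mathbf{w}_2\|_2^2)+C\sum_{i=1}^n\xi_i+C^*\sum_{i'=1}^m(\zeta_{i'1}+\zeta_{i'2})$$ subject to $(\mathbf{w}_{y_i}-\mathbf{w}_l)^\top\mathbf{x}_i\ge e_{il}-\xi_i$ with $e_{il}=1-\delta_{il}$ for $i=1,\dots,n$, $l=1,2$ (where $\delta_{il}=1$ if $y_i=l$ and $0$ otherwise), and $\big|\mathbf{w}_k^\top\mathbf{x}^*_{i'}-\max_{l=1,2}\mathbf{w}_l^\top\mathbf{x}^*_{i'}\big|\le\Delta+\zeta_{i'k}$, $\zeta_{i'k}\ge 0$ for $i'=1,\dots,m$, $k=1,2$. Then this problem reduces to the binary Universum-SVM (U-SVM) problem with zero bias: any optimal solution satisfies $\mathbf{w}_1=-\mathbf{w}_2$, and, relabeling class 1 as $+1$ and class 2 as $-1$ (labels $\tilde y_i\in\{+1,-1\}$), the vector $\mathbf{w}=\mathbf{w}_1-\mathbf{w}_2$ is an optimal solution of the U-SVM-type problem $$\min_{\mathbf{w},\boldsymbol\xi,\boldsymbol\zeta}\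 \tfrac14\|\mathbf{w}\|_2^2+C\sum_{i=1}^n\xi_i+C^*\sum_{i'=1}^m\zeta_{i'}\quad\text{s.t.}\quad \tilde y_i\,\mathbf{w}^\top\mathbf{x}_i\ge 1-\xi_i,\ \xi_i\ge0;\quad |\mathbf{w}^\top\mathbf{x}^*_{i'}|\le\Delta+\zeta_{i'},\ \zeta_{i'}\ge0,$$ i.e. the binary U-SVM with bias term $b=0$.
   Context: The Universum-SVM (U-SVM) of Weston et al. (2006) for binary labels $\tilde y_i\in\{\pm1\}$ minimizes a weighted sum of $\|\mathbf{w}\|^2$, hinge losses $\xi_i$ on the training constraints $\tilde y_i(\mathbf{w}^\top\mathbf{x}_i+b)\ge 1-\xi_i$, and $\epsilon$-insensitive losses $\zeta_{i'}$ on universum constraints $|\mathbf{w}^\top\mathbf{x}^*_{i'}+b|\le\Delta+\zeta_{i'}$; here $b=0$. *)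

From HB Require Import structures.
From mathcomp Require Import all_boot all_order all_algebra.
Set Implicit Arguments. Unset Strict Implicit. Unset Printing Implicit Defensive.
Import Order.TTheory GRing.Theory Num.Theory.
Local Open Scope ring_scope.

Section SVM.
Variables (R : realFieldType) (d n m : nat).

Definition dotv (u v : 'rV[R]_d) : R := \sum_(j < d) u 0 j * v 0 j.

Definition sqnorm (u : 'rV[R]_d) : R := dotv u u.

(* Classes {1,2} are encoded as 'I_2: class 1 = ord0, class 2 = ord_max. *)
Variables (x : 'I_n -> 'rV[R]_d) (y : 'I_n -> 'I_2) (xs : 'I_m -> 'rV[R]_d)
          (C Cs Delta : R).

Definition e_il (i : 'I_n) (l : 'I_2) : R := if y i == l then 0 else 1.

Definition musvm_feasible (W : 'I_2 -> 'rV[R]_d) (xi : 'I_n -> R)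
    (zeta : 'I_m -> 'I_2 -> R) : Prop :=
  (forall (i : 'I_n) (l : 'I_2), dotv (W (y i) - W l) (x i) >= e_il i l - xi i) /\
  (forall (i' : 'I_m) (k : 'I_2),
      `| dotv (W k) (xs i') - Num.max (dotv (W ord0) (xs i')) (dotv (W ord_max) (xs i')) |
        <= Delta + zeta i' k /\ 0 <= zeta i' k).

Definition musvm_obj (W : 'I_2 -> 'rV[R]_d) (xi : 'I_n -> R)
    (zeta : 'I_m -> 'I_2 -> R) : R :=
  2^-1 * (sqnorm (W ord0) + sqnorm (W ord_max)) + C * \sum_(i < n) xi i
  + Cs * \sum_(i' < m) (zeta i' ord0 + zeta i' ord_max).

Definition musvm_optimal W xi zeta : Prop :=
  musvm_feasible W xi zeta /\
  forall W' xi' zeta', musvm_feasible W' xi' zeta' ->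
    musvm_obj W xi zeta <= musvm_obj W' xi' zeta'.

Definition ytilde (i : 'I_n) : R := if y i == ord0 then 1 else -1.

Definition usvm_feasible (w : 'rV[R]_d) (xi : 'I_n -> R) (zeta : 'I_m -> R) : Prop :=
  (forall i : 'I_n, ytilde i * dotv w (x i) >= 1 - xi i /\ 0 <= xi i) /\
  (forall i' : 'I_m, `| dotv w (xs i') | <= Delta + zeta i' /\ 0 <= zeta i').

Definition usvm_obj (w : 'rV[R]_d) (xi : 'I_n -> R) (zeta : 'I_m -> R) : R :=
  4^-1 * sqnorm w + C * \sum_(i < n) xi i + Cs * \sum_(i' < m) zeta i'.

Definition usvm_optimal w xi zeta : Prop :=
  usvm_feasible w xi zeta /\
  forall w' xi' zeta', usvm_feasible w' xi' zeta' ->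
    usvm_obj w xi zeta <= usvm_obj w' xi' zeta'.

End SVM.

From HB Require Import structures.
From mathcomp Require Import all_boot all_order all_algebra.
From mathcomp Require Import ring lra.
Set Implicit Arguments.
Unset Strict Implicit.
Unset Printing Implicit Defensive.
Import Order.TTheory GRing.Theory Num.Theory.
Local Open Scope ring_scope.

(* The MU-SVM constraints only involve the difference w = W1 - W2, while by the
   parallelogram law the regularizer is |w|^2/4 + |W1 + W2|^2/4.  Translating
   both weight vectors by -(W1 + W2)/2 keeps feasibility and kills the second
   term, so an optimum has W1 + W2 = 0 and its objective is the U-SVM objective
   of w.  Conversely every U-SVM point w lifts to the MU-SVM point (w/2, -w/2),
   with the universum slack given to the class of lower score, at the same
   cost. *)

Lemma ord2P (k : 'I_2) : k = ord0 \/ k = ord_max.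
Proof. by case: k => [[|[|k]] Hk]; [left|right|]; try exact: val_inj. Qed.

Lemma ord0_eq_max : (ord0 == ord_max :> 'I_2) = false.
Proof. by []. Qed.

Lemma ord_max_eq0 : (ord_max == ord0 :> 'I_2) = false.
Proof. by []. Qed.

Lemma normB_maxE (R : realDomainType) (a b : R) :
  `|a - b| = Num.max `|a - Num.max a b| `|b - Num.max a b|.
Proof.
case: (lerP a b) => hab; rewrite subrr normr0.
  by rewrite max_l // distrC ger0_norm // subr_ge0.
by rewrite max_r // distrC ger0_norm // subr_ge0 ltW.
Qed.

Section InnerProduct.
Variables (R : realFieldType) (d : nat).
Implicit Types u v w : 'rV[R]_d.

Lemma dotvDl u v w : dotv (u + v) w = dotv u w + dotv v w.
Proof. by rewrite /dotv -big_split; apply: eq_bigr => j _; rewrite mxE mulrDl. Qed.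

Lemma dotvNl u w : dotv (- u) w = - dotv u w.
Proof. by rewrite /dotv -sumrN; apply: eq_bigr => j _; rewrite mxE mulNr. Qed.

Lemma dotvBl u v w : dotv (u - v) w = dotv u w - dotv v w.
Proof. by rewrite dotvDl dotvNl. Qed.

Lemma dotvZl (a : R) u w : dotv (a *: u) w = a * dotv u w.
Proof. by rewrite /dotv mulr_sumr; apply: eq_bigr => j _; rewrite mxE mulrA. Qed.

Lemma scale_half_addr u : 2^-1 *: u + 2^-1 *: u = u.
Proof.
have half2 : 2^-1 + 2^-1 = 1 :> R by field.
by rewrite -scalerDl half2 scale1r.
Qed.

Lemma sqnorm_ge0 u : 0 <= sqnorm u.
Proof. by apply: sumr_ge0 => j _; rewrite -expr2 sqr_ge0. Qed.

Lemma sqnorm0 : sqnorm (0 : 'rV[R]_d) = 0.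
Proof. by rewrite /sqnorm /dotv big1 // => j _; rewrite mxE mul0r. Qed.

Lemma sqnorm_eq0 u : sqnorm u = 0 -> u = 0.
Proof.
move=> /psumr_eq0P u0; apply/rowP => j; rewrite mxE.
have /eqP := u0 (fun i _ => ltac:(by rewrite -expr2 sqr_ge0)) j isT.
by rewrite mulf_eq0 orbb => /eqP.
Qed.

Lemma sqnorm_parallelogram u v :
  sqnorm (u + v) + sqnorm (u - v) = 2 * (sqnorm u + sqnorm v).
Proof.
rewrite /sqnorm /dotv -!big_split mulr_sumr /=.
by apply: eq_bigr => j _; rewrite !mxE; ring.
Qed.

End InnerProduct.

Section MultiClassToBinary.
Variables (R : realFieldType) (d n m : nat).
Variables (x : 'I_n -> 'rV[R]_d) (y : 'I_n -> 'I_2) (xs : 'I_m -> 'rV[R]_d).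
Variables (C Cs Delta : R).
Implicit Types (W : 'I_2 -> 'rV[R]_d) (w c : 'rV[R]_d) (xi : 'I_n -> R).

Definition sum_slack (zeta : 'I_m -> 'I_2 -> R) : 'I_m -> R :=
  fun i' => zeta i' ord0 + zeta i' ord_max.

Definition split_weights w : 'I_2 -> 'rV[R]_d :=
  fun k => if k == ord0 then 2^-1 *: w else - (2^-1 *: w).

Definition split_slack w (zeta : 'I_m -> R) : 'I_m -> 'I_2 -> R :=
  fun i' k => if (k == ord0) == (dotv w (xs i') < 0) then zeta i' else 0.

Lemma musvm_objE W xi zeta :
  musvm_obj C Cs W xi zeta =
  usvm_obj C Cs (W ord0 - W ord_max) xi (sum_slack zeta)
  + 4^-1 * sqnorm (W ord0 + W ord_max).
Proof.
rewrite /musvm_obj /usvm_obj /sum_slack.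
have -> : 2^-1 * (sqnorm (W ord0) + sqnorm (W ord_max)) =
    4^-1 * sqnorm (W ord0 - W ord_max) + 4^-1 * sqnorm (W ord0 + W ord_max).
  by have := sqnorm_parallelogram (W ord0) (W ord_max); lra.
ring.
Qed.

Lemma musvm_feasible_translate W xi zeta c :
  musvm_feasible x y xs Delta W xi zeta ->
  musvm_feasible x y xs Delta (fun k => W k + c) xi zeta.
Proof.
move=> [Htr Hun]; split=> [i l|i' k].
  by rewrite (addrC (W l)) addrKA; exact: Htr.
by rewrite !dotvDl -addr_maxl (addrC (Num.max _ _)) addrKA; exact: Hun.
Qed.

Lemma musvm_usvm_feasible W xi zeta :
  musvm_feasible x y xs Delta W xi zeta ->
  usvm_feasible x y xs Delta (W ord0 - W ord_max) xi (sum_slack zeta).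
Proof.
move=> [Htr Hun]; split=> [i|i'].
  have := Htr i (y i); rewrite /e_il eqxx dotvBl subrr sub0r oppr_le0 => xi_ge0.
  split=> //; rewrite /ytilde dotvBl.
  case: (ord2P (y i)) => yi; rewrite yi ?eqxx ?ord0_eq_max ?ord_max_eq0.
    by have := Htr i ord_max; rewrite /e_il yi ord0_eq_max dotvBl mul1r.
  by have := Htr i ord0; rewrite /e_il yi ord_max_eq0 dotvBl mulN1r opprB.
have [h0 z0_ge0] := Hun i' ord0; have [h1 z1_ge0] := Hun i' ord_max.
rewrite /sum_slack dotvBl normB_maxE ge_max; split; last exact: addr_ge0.
apply/andP; split; [apply: le_trans h0 _ | apply: le_trans h1 _]; lra.
Qed.

Lemma usvm_musvm_feasible w xi zeta : 0 <= Delta ->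
  usvm_feasible x y xs Delta w xi zeta ->
  musvm_feasible x y xs Delta (split_weights w) xi (split_slack w zeta).
Proof.
move=> Delta_ge0 [Htr Hun]; split=> [i l|i' k].
  have := Htr i; rewrite /ytilde /e_il /split_weights.
  case: (ord2P (y i)) => ->; case: (ord2P l) => -> /=;
    rewrite ?eqxx ?ord0_eq_max ?ord_max_eq0 !dotvBl ?dotvNl !dotvZl => -[]; lra.
have := Hun i'; rewrite /split_slack /split_weights.
set t := dotv w (xs i'); move=> [ht z_ge0].
have := ht; rewrite ler_norml => /andP[ht1 ht2].
case: (ord2P k) => ->; rewrite ?eqxx ?ord0_eq_max ?ord_max_eq0 ?dotvNl dotvZl -/t;
  case: (ltrP t 0) => t_sign /=; case: (lerP (2^-1 * t) (- (2^-1 * t))) => hmax;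
  rewrite ler_norml; split=> //; apply/andP; split; lra.
Qed.

Lemma musvm_obj_center W xi (zeta : 'I_m -> 'I_2 -> R) :
  musvm_obj C Cs W xi zeta =
  musvm_obj C Cs (fun k => W k - 2^-1 *: (W ord0 + W ord_max)) xi zeta
  + 4^-1 * sqnorm (W ord0 + W ord_max).
Proof.
set s := W ord0 + W ord_max; set h := 2^-1 *: s.
have diffE : W ord0 - h - (W ord_max - h) = W ord0 - W ord_max.
  by rewrite opprB addrA subrK.
have sumE : W ord0 - h + (W ord_max - h) = 0.
  by rewrite addrACA -opprD scale_half_addr subrr.
by rewrite !musvm_objE /= diffE sumE sqnorm0 mulr0 addr0.
Qed.

Lemma sum_split_slack w zeta : sum_slack (split_slack w zeta) =1 zeta.
Proof.
move=> i'; rewrite /sum_slack /split_slack eqxx ord_max_eq0.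
by case: (dotv w (xs i') < 0); rewrite /= ?addr0 ?add0r.
Qed.

Lemma musvm_obj_split w xi zeta :
  musvm_obj C Cs (split_weights w) xi (split_slack w zeta) =
  usvm_obj C Cs w xi zeta.
Proof.
rewrite musvm_objE /split_weights eqxx ord_max_eq0 subrr sqnorm0 mulr0 addr0.
rewrite opprK scale_half_addr /usvm_obj.
by rewrite (eq_bigr _ (fun i' _ => sum_split_slack w zeta i')).
Qed.

End MultiClassToBinary.

Theorem proposition1 (R : realFieldType) (d n m : nat)
    (x : 'I_n -> 'rV[R]_d) (y : 'I_n -> 'I_2) (xs : 'I_m -> 'rV[R]_d)
    (C Cs Delta : R) (hC : 0 < C) (hCs : 0 < Cs) (hDelta : 0 <= Delta)
    (W : 'I_2 -> 'rV[R]_d) (xi : 'I_n -> R) (zeta : 'I_m -> 'I_2 -> R) :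
  musvm_optimal x y xs C Cs Delta W xi zeta ->
  W ord0 = - W ord_max /\
  exists (xi' : 'I_n -> R) (zeta' : 'I_m -> R),
    usvm_optimal x y xs C Cs Delta (W ord0 - W ord_max) xi' zeta'.
Proof.
move=> [feasW optW].
have W_sum0 : W ord0 + W ord_max = 0.
  set s := W ord0 + W ord_max.
  have := optW _ _ _ (musvm_feasible_translate (- (2^-1 *: s)) feasW).
  rewrite {1}musvm_obj_center -/s => centered_le.
  by apply: sqnorm_eq0; have := sqnorm_ge0 s; lra.
split; first by apply/eqP; rewrite -addr_eq0 W_sum0.
exists xi, (sum_slack zeta); split; first exact: musvm_usvm_feasible.
move=> w' xi' zeta' feas'.
have := optW _ _ _ (usvm_musvm_feasible hDelta feas').
by rewrite musvm_obj_split musvm_objE W_sum0 sqnorm0 mulr0 addr0.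
Qed.
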